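(* Let $T$ be a rooted binary phylogenetic tree with leaf set $X$ under the $N_2$ model. Then $$RA_{\rm MP}(T)\ge 1-p_{\max},\qquad p_{\max}=\max\{p(x):x\in X\}.$$
   Context: A rooted binary phylogenetic tree is a finite tree with a distinguished root vertex $\rho$, all edges directed away from $\rho$, in which $\rho$ has out-degree 2 (or 1), and every other vertex has in-degree 1 and out-degree 0 or 2; out-degree-0 vertices are leaves, forming the leaf set $X$. Under the Neyman 2-state model $N_2$ on a state set $\mathcal A$ with $|\mathcal A|=2$, each edge $e$ carries a substitution probability $p_e\in[0,\frac12]$; given the root state $F(\rho)$, states propagate independently along edges: for an edge $(u,v)$, $F(v)=F(u)$ with probability $1-p_e$ and $F(v)$ is the other state otherwise. The character is $f=F|_X$, and $p(v)$ is the probability that $F(v)\ne F(\rho)$. Fitch sets: each leaf $x$ gets $\{f(x)\}$; a vertex with children $v_1,v_2$ gets $\mathrm{FS}(v_1)\cap\mathrm{FS}(v_2)$ if nonempty, else $\mathrm{FS}(v_1)\cup\mathrm{FS}(v_2)$; a vertex with one child gets its child's set. $\mathrm{MP}(f,T)$ is a uniformly random state from $\mathrm{FS}(\rho)$, and $RA_{\rm MP}(T)=\mathbb P(\mathrm{MP}(f,T)=\alpha\mid F(\rho)=\alpha)$. *)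

From HB Require Import structures.
From mathcomp Require Import all_boot all_order all_algebra.
Set Implicit Arguments. Unset Strict Implicit. Unset Printing Implicit Defensive.
Import Order.TTheory GRing.Theory Num.Theory.
Local Open Scope ring_scope.

(* A non-root vertex v together with the substitution probability of the
   edge entering v: either a leaf, or a vertex with two children. *)
Inductive ptree (R : Type) : Type :=
  | PLeaf of R
  | PNode of R & ptree R & ptree R.

(* The root: out-degree 1 or 2. *)
Inductive rtree (R : Type) : Type :=
  | Root1 of ptree R
  | Root2 of ptree R & ptree R.

Section N2.
Variable R : realFieldType.

Fixpoint pleaves (t : ptree R) : nat :=
  match t with PLeaf _ => 1%N | PNode _ l r => (pleaves l + pleaves r)%N end.

Definition nleaves (T : rtree R) : nat :=
  match T with Root1 t => pleaves t | Root2 l r => (pleaves l + pleaves r)%N end.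

Fixpoint pvalid (t : ptree R) : bool :=
  match t with
  | PLeaf p => (0 <= p) && (p <= 2^-1)
  | PNode p l r => [&& 0 <= p, p <= 2^-1, pvalid l & pvalid r]
  end.

Definition rvalid (T : rtree R) : bool :=
  match T with Root1 t => pvalid t | Root2 l r => pvalid l && pvalid r end.

Definition trans (p : R) (s x : bool) : R := if x == s then 1 - p else p.

(* probability of the leaf character f (leaves listed left to right) of the
   subtree below an edge, given the state s at the upper end of that edge *)
Fixpoint cprob (t : ptree R) (s : bool) (f : seq bool) : R :=
  match t with
  | PLeaf p => if f is [:: x] then trans p s x else 0
  | PNode p l r =>
      \sum_(x : bool) trans p s x * cprob l x (take (pleaves l) f)
                                  * cprob r x (drop (pleaves l) f)
  end.

(* P(f = F|_X | F(rho) = a) *)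
Definition rprob (T : rtree R) (a : bool) (f : seq bool) : R :=
  match T with
  | Root1 t => cprob t a f
  | Root2 l r => cprob l a (take (pleaves l) f) * cprob r a (drop (pleaves l) f)
  end.

Definition fitch_comb (A B : {set bool}) : {set bool} :=
  if A :&: B != set0 then A :&: B else A :|: B.

Fixpoint fitch_t (t : ptree R) (f : seq bool) : {set bool} :=
  match t with
  | PLeaf _ => [set head false f]
  | PNode _ l r => fitch_comb (fitch_t l (take (pleaves l) f))
                              (fitch_t r (drop (pleaves l) f))
  end.

Definition fitch (T : rtree R) (f : seq bool) : {set bool} :=
  match T with
  | Root1 t => fitch_t t f
  | Root2 l r => fitch_comb (fitch_t l (take (pleaves l) f))
                            (fitch_t r (drop (pleaves l) f))
  end.

(* RA_MP(T) = P(MP(f,T) = a | F(rho) = a), MP uniform on the Fitch set *)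
Definition RA_MP (T : rtree R) (a : bool) : R :=
  \sum_(f : (nleaves T).-tuple bool)
     rprob T a f * (if a \in fitch T f then (#|fitch T f|%:R)^-1 else 0).

(* p(x) = P(F(x) <> F(rho)) for the i-th leaf x (root state a) *)
Definition pleaf {T : rtree R} (a : bool) (i : 'I_(nleaves T)) : R :=
  \sum_(f : (nleaves T).-tuple bool)
     rprob T a f * (if tnth f i != a then 1 else 0).

Definition pmax (T : rtree R) (a : bool) : R :=
  \big[Num.max/0]_(i < nleaves T) pleaf a i.

End N2.

From mathcomp Require Import all_boot all_order all_algebra.
From mathcomp Require Import ring lra.
Set Implicit Arguments. Unset Strict Implicit. Unset Printing Implicit Defensive.
Import Order.TTheory GRing.Theory Num.Theory.
Local Open Scope ring_scope.

(* Encode a Fitch set [A] by [sgset A], which is [1], [-1] or [0] according as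
   [A] is [{true}], [{false}] or both states.  Given the state [s] above a
   subtree, the expected code of its Fitch set is [K * sgb s] and the
   probability that it is ambiguous is [B] ([fitch_bias] and [fitch_ambig]),
   where [(K, B)] obey an explicit recursion since the two subtrees of a
   vertex evolve independently.  Now [RA_MP = (1 + K) / 2] while
   [1 - p(x) = (1 + c_x) / 2], with [c_x] ([leaf_bias]) the product of the
   [1 - 2 p_e] along the path to the leaf [x]; and [B >= 0] gives
   [K >= (1 - 2 p) * min (K_l, K_r)] at every vertex, so [K >= c_x] for some
   leaf [x] by induction. *)

Section SumWords.
Variable R : pzSemiRingType.

Fixpoint sum_words (n : nat) (F : seq bool -> R) : R :=
  if n is n'.+1 then sum_words n' (fun f => F (true :: f))
                     + sum_words n' (fun f => F (false :: f))
  else F [::].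

Lemma eq_sum_words n F G :
  (forall f, size f = n -> F f = G f) -> sum_words n F = sum_words n G.
Proof.
elim: n F G => [|n IH] F G eqFG /=; first exact: eqFG.
by congr (_ + _); apply: IH => f size_f; apply: eqFG; rewrite /= size_f.
Qed.

Lemma sum_wordsD n F G :
  sum_words n (fun f => F f + G f) = sum_words n F + sum_words n G.
Proof.
elim: n F G => [|n IH] F G //=.
by rewrite (IH (fun f => F (true :: f))) (IH (fun f => F (false :: f))) addrACA.
Qed.

Lemma sum_wordsZl n c F : sum_words n (fun f => c * F f) = c * sum_words n F.
Proof.
elim: n F => [|n IH] F //=.
by rewrite (IH (fun f => F (true :: f))) (IH (fun f => F (false :: f))) mulrDr.
Qed.

Lemma sum_wordsZr n c F : sum_words n (fun f => F f * c) = sum_words n F * c.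
Proof.
elim: n F => [|n IH] F //=.
by rewrite (IH (fun f => F (true :: f))) (IH (fun f => F (false :: f))) mulrDl.
Qed.

Lemma sum_words_sum (I : Type) (r : seq I) (P : pred I) n (F : I -> seq bool -> R) :
  sum_words n (fun f => \sum_(i <- r | P i) F i f) =
  \sum_(i <- r | P i) sum_words n (F i).
Proof.
elim: n F => [|n IH] F //=.
by rewrite (IH (fun i f => F i (true :: f))) (IH (fun i f => F i (false :: f))) big_split.
Qed.

Lemma sum_words_cat n1 n2 F :
  sum_words (n1 + n2) F = sum_words n1 (fun f1 => sum_words n2 (fun f2 => F (f1 ++ f2))).
Proof.
elim: n1 F => [|n1 IH] F //=.
by rewrite (IH (fun f => F (true :: f))) (IH (fun f => F (false :: f))).
Qed.

Lemma sum_tuple_words n (F : seq bool -> R) :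
  \sum_(t : n.-tuple bool) F t = sum_words n F.
Proof.
elim: n F => [|n IH] F /=.
  rewrite (big_pred1 [tuple]) // => t; apply/esym/eqP/val_inj.
  by case: t => [[]].
rewrite (reindex (fun p : bool * n.-tuple bool => [tuple of p.1 :: p.2])) /=; last first.
  exists (fun t : n.+1.-tuple bool => (thead t, [tuple of behead t])) => /=.
    by move=> [x t] _; congr (_, _); apply: val_inj.
  by move=> t _; apply: val_inj; case: t => [[|x s]].
rewrite -(pair_big xpredT xpredT (fun x (t : n.-tuple bool) => F (x :: t))) big_bool /=.
by congr (_ + _); apply: (IH (fun f => F (_ :: f))).
Qed.

End SumWords.

Lemma sum_words_ge0 (R : numDomainType) n (F : seq bool -> R) :
  (forall f, 0 <= F f) -> 0 <= sum_words n F.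
Proof. by elim: n F => [|n IH] F F_ge0 //=; rewrite addr_ge0 ?IH. Qed.

Section Tree.
Variable R : realFieldType.
Implicit Types (t l r : ptree R) (p : R) (s x : bool) (g : seq bool -> R).

Definition expect t s g : R :=
  sum_words (pleaves t) (fun f => cprob t s f * g f).

Definition expect2 l r x (h : seq bool -> seq bool -> R) : R :=
  expect l x (fun f1 => expect r x (h f1)).

Lemma eq_expect t s g g' :
  (forall f, size f = pleaves t -> g f = g' f) -> expect t s g = expect t s g'.
Proof. by move=> eq_g; apply: eq_sum_words => f size_f; rewrite eq_g. Qed.

Lemma expectD t s g g' :
  expect t s (fun f => g f + g' f) = expect t s g + expect t s g'.
Proof. by rewrite /expect -sum_wordsD; apply: eq_sum_words => f _; rewrite mulrDr. Qed.

Lemma expectZ t s c g : expect t s (fun f => c * g f) = c * expect t s g.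
Proof. by rewrite /expect -sum_wordsZl; apply: eq_sum_words => f _; rewrite mulrCA. Qed.

Lemma expectZr t s c g : expect t s (fun f => g f * c) = expect t s g * c.
Proof. by rewrite /expect -sum_wordsZr; apply: eq_sum_words => f _; rewrite mulrA. Qed.

Lemma expectN t s g : expect t s (fun f => - g f) = - expect t s g.
Proof. by rewrite -mulN1r -expectZ; apply: eq_expect => f _; rewrite mulN1r. Qed.

Lemma expect_leaf p s g :
  expect (PLeaf p) s g = trans p s true * g [:: true] + trans p s false * g [:: false].
Proof. by []. Qed.

Lemma expect_node p l r s g :
  expect (PNode p l r) s g =
  \sum_x trans p s x * expect2 l r x (fun f1 f2 => g (f1 ++ f2)).
Proof.
rewrite /expect /= sum_words_cat.
under eq_sum_words => f1 size_f1.
  under eq_sum_words => f2 _.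
    rewrite take_size_cat // drop_size_cat // mulr_suml.
    under eq_bigr => x _ do rewrite -!mulrA.
  over.
  rewrite sum_words_sum.
over.
rewrite sum_words_sum; apply: eq_bigr => x _.
rewrite /expect2 /expect -sum_wordsZl; apply: eq_sum_words => f1 _.
by rewrite !sum_wordsZl mulrCA -sum_wordsZl.
Qed.

Lemma eq_expect2 l r x h h' :
  (forall f1 f2, size f1 = pleaves l -> size f2 = pleaves r -> h f1 f2 = h' f1 f2) ->
  expect2 l r x h = expect2 l r x h'.
Proof. by move=> eq_h; apply: eq_expect => f1 ?; apply: eq_expect => f2 ?; apply: eq_h. Qed.

Lemma expect2D l r x h h' :
  expect2 l r x (fun f1 f2 => h f1 f2 + h' f1 f2) = expect2 l r x h + expect2 l r x h'.
Proof. by rewrite /expect2 -expectD; apply: eq_expect => f1 _; rewrite expectD. Qed.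

Lemma expect2Z l r x c h :
  expect2 l r x (fun f1 f2 => c * h f1 f2) = c * expect2 l r x h.
Proof. by rewrite /expect2 -expectZ; apply: eq_expect => f1 _; rewrite expectZ. Qed.

Lemma expect2N l r x h :
  expect2 l r x (fun f1 f2 => - h f1 f2) = - expect2 l r x h.
Proof. by rewrite /expect2 -expectN; apply: eq_expect => f1 _; rewrite expectN. Qed.

Lemma expect2M l r x g1 g2 :
  expect2 l r x (fun f1 f2 => g1 f1 * g2 f2) = expect l x g1 * expect r x g2.
Proof. by rewrite /expect2 -expectZr; apply: eq_expect => f1 _; rewrite expectZ. Qed.

Lemma sum_trans p s : \sum_x trans p s x = 1.
Proof. by rewrite big_bool /trans; case: s => /=; ring. Qed.

Definition sgb x : R := if x then 1 else -1.

Lemma sum_trans_sgb p s : \sum_x trans p s x * sgb x = (1 - 2 * p) * sgb s.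
Proof. by rewrite big_bool /trans /sgb; case: s => /=; ring. Qed.

Lemma expect1 t s : expect t s (fun=> 1) = 1.
Proof.
elim: t s => [p|p l IHl r IHr] s.
  by rewrite expect_leaf !mulr1 -(sum_trans p s) big_bool.
rewrite expect_node -[RHS](sum_trans p s); apply: eq_bigr => x _.
by rewrite /expect2 IHr IHl mulr1.
Qed.

Lemma cprob_ge0 t s f : pvalid t -> 0 <= cprob t s f.
Proof.
have trans_ge0 p s' y : 0 <= p -> p <= 2^-1 -> 0 <= trans p s' y.
  by rewrite /trans; case: ifP => _ *; lra.
elim: t s f => [p|p l IHl r IHr] s f /=.
  by case/andP=> *; case: f => [|y []] //; apply: trans_ge0.
case/and4P=> *; apply: sumr_ge0 => y _.
by rewrite !mulr_ge0 ?IHl ?IHr ?trans_ge0.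
Qed.

Lemma expect_ge0 t s g : pvalid t -> (forall f, 0 <= g f) -> 0 <= expect t s g.
Proof. by move=> t_ok g_ge0; apply: sum_words_ge0 => f; rewrite mulr_ge0 ?cprob_ge0. Qed.

Definition sgset (A : {set bool}) : R := (true \in A)%:R - (false \in A)%:R.

(* On nonempty sets, [ambig A] is [1] for [[set: bool]] and [0] otherwise. *)
Definition ambig (A : {set bool}) : R := 1 - sgset A ^+ 2.

Lemma ambig_ge0 A : 0 <= ambig A.
Proof. by rewrite /ambig /sgset; case: (true \in A); case: (false \in A); rewrite /=; lra. Qed.

Lemma mem_fitch_comb (A B : {set bool}) y :
  y \in fitch_comb A B =
  if ((true \in A) && (true \in B)) || ((false \in A) && (false \in B))
  then (y \in A) && (y \in B) else (y \in A) || (y \in B).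
Proof.
rewrite /fitch_comb.
have -> : (A :&: B != set0) =
    ((true \in A) && (true \in B)) || ((false \in A) && (false \in B)).
  apply/set0Pn/idP => [[[] ] | /orP[] ?]; rewrite ?inE.
  - by move=> ->.
  - by move=> ->; rewrite orbT.
  - by exists true; rewrite inE.
  - by exists false; rewrite inE.
by case: ifP; rewrite inE.
Qed.

(* Both identities are written as sums of products of a term in [A] and a term
   in [B], so that they can be integrated against two independent subtrees. *)
Lemma sgset_fitch_comb A B :
  sgset (fitch_comb A B) = 2^-1 * (sgset A * 1 + 1 * sgset B
                                   + ambig A * sgset B + sgset A * ambig B).
Proof.
rewrite /ambig /sgset !mem_fitch_comb.
by case: (true \in A); case: (false \in A); case: (true \in B); case: (false \in B);
  rewrite /=; lra.
Qed.

Lemma ambig_fitch_comb A B :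
  ambig (fitch_comb A B) = 2^-1 * (1 * 1 - ambig A * 1 - 1 * ambig B
                                   + 3 * ambig A * ambig B - sgset A * sgset B).
Proof.
rewrite /ambig /sgset !mem_fitch_comb.
by case: (true \in A); case: (false \in A); case: (true \in B); case: (false \in B);
  rewrite /=; lra.
Qed.

Fixpoint fitch_bias t : R :=
  match t with
  | PLeaf p => 1 - 2 * p
  | PNode p l r => (1 - 2 * p) * (2^-1 * (fitch_bias l + fitch_bias r
                       + fitch_ambig l * fitch_bias r + fitch_bias l * fitch_ambig r))
  end
with fitch_ambig t : R :=
  match t with
  | PLeaf _ => 0
  | PNode _ l r => 2^-1 * (1 - fitch_ambig l - fitch_ambig r
                       + 3 * (fitch_ambig l * fitch_ambig r) - fitch_bias l * fitch_bias r)
  end.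

Lemma fitch_t_node_cat p l r f1 f2 : size f1 = pleaves l ->
  fitch_t (PNode p l r) (f1 ++ f2) = fitch_comb (fitch_t l f1) (fitch_t r f2).
Proof. by move=> size_f1 /=; rewrite take_size_cat // drop_size_cat. Qed.

Lemma expect_fitch_t t s :
  expect t s (fun f => sgset (fitch_t t f)) = fitch_bias t * sgb s /\
  expect t s (fun f => ambig (fitch_t t f)) = fitch_ambig t.
Proof.
elim: t s => [p|p l IHl r IHr] s.
  by rewrite !expect_leaf /ambig /sgset /= !inE /trans /sgb; case: s => /=; split; ring.
split; rewrite expect_node.
- rewrite [fitch_bias _]/= mulrAC -sum_trans_sgb mulr_suml; apply: eq_bigr => x _.
  rewrite -mulrA [sgb x * _]mulrC; congr (_ * _).
  have [sgl ambl] := IHl x; have [sgr ambr] := IHr x.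
  under eq_expect2 => f1 f2 size_f1 _ do rewrite fitch_t_node_cat // sgset_fitch_comb.
  rewrite expect2Z !expect2D !expect2M !expect1 sgl ambl sgr ambr.
  by move=> {sgl ambl sgr ambr}; case: x; rewrite /sgb /=; ring.
- rewrite -[RHS]mul1r -(sum_trans p s) mulr_suml; apply: eq_bigr => x _.
  congr (_ * _).
  have [sgl ambl] := IHl x; have [sgr ambr] := IHr x.
  under eq_expect2 => f1 f2 size_f1 _ do rewrite fitch_t_node_cat // ambig_fitch_comb.
  rewrite expect2Z !expect2D !expect2N !expect2M expectZ !expect1 sgl ambl sgr ambr.
  by move=> {sgl ambl sgr ambr}; case: x; rewrite /sgb /=; ring.
Qed.

Lemma fitch_ambig_ge0 t : pvalid t -> 0 <= fitch_ambig t.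
Proof.
move=> t_ok; rewrite -(expect_fitch_t t true).2.
by apply: expect_ge0 => // f; apply: ambig_ge0.
Qed.

Fixpoint leaf_bias t (i : nat) : R :=
  match t with
  | PLeaf p => 1 - 2 * p
  | PNode p l r => (1 - 2 * p) *
      (if (i < pleaves l)%N then leaf_bias l i else leaf_bias r (i - pleaves l))
  end.

Lemma leaf_bias_ge0 t i : pvalid t -> 0 <= leaf_bias t i.
Proof.
elim: t i => [p|p l IHl r IHr] i /=; first by case/andP => *; lra.
case/and4P => *; rewrite mulr_ge0 //; first lra.
by case: ifP => _; [apply: IHl | apply: IHr].
Qed.

Lemma expect_sgb_nth t s i : (i < pleaves t)%N ->
  expect t s (fun f => sgb (nth false f i)) = leaf_bias t i * sgb s.
Proof.
elim: t s i => [p|p l IHl r IHr] s i /= lt_i.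
  by case: i lt_i => // _; rewrite expect_leaf /trans /sgb; case: s => /=; ring.
rewrite expect_node mulrAC -sum_trans_sgb mulr_suml; apply: eq_bigr => x _.
rewrite -mulrA [sgb x * _]mulrC; congr (_ * _); case: ifP => lt_il.
- under eq_expect2 => f1 f2 size_f1 _ do rewrite nth_cat size_f1 lt_il -[sgb _]mulr1.
  by rewrite expect2M IHl // expect1 mulr1.
- under eq_expect2 => f1 f2 size_f1 _ do rewrite nth_cat size_f1 lt_il -[sgb _]mul1r.
  rewrite expect2M expect1 mul1r IHr // ltn_subLR ?lt_i //.
  by rewrite leqNgt lt_il.
Qed.

Lemma exists_leaf_bias_le_fitch_bias t : pvalid t ->
  exists2 i, (i < pleaves t)%N & leaf_bias t i <= fitch_bias t.
Proof.
elim: t => [p|p l IHl r IHr] /=; first by exists 0%N.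
case/and4P=> p_ge0 p_le l_ok r_ok.
have [i lt_il le_il] := IHl l_ok; have [j lt_jr le_jr] := IHr r_ok.
set kl := fitch_bias l in le_il *; set kr := fitch_bias r in le_jr *.
have kl_ge0 := le_trans (leaf_bias_ge0 i l_ok) le_il.
have kr_ge0 := le_trans (leaf_bias_ge0 j r_ok) le_jr.
have al_kr_ge0 := mulr_ge0 (fitch_ambig_ge0 l_ok) kr_ge0.
have kl_ar_ge0 := mulr_ge0 kl_ge0 (fitch_ambig_ge0 r_ok).
have [le_lr | lt_rl] := leP kl kr.
- exists i; first by rewrite ltn_addr.
  by rewrite lt_il ler_wpM2l; [lra | lra | apply: le_trans le_il _; lra].
- exists (pleaves l + j)%N; first by rewrite ltn_add2l.
  rewrite ltnNge leq_addr /= addKn ler_wpM2l //; first lra.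
  by apply: le_trans le_jr _; lra.
Qed.

Lemma sum_tuple_expect t s g :
  \sum_(f : (pleaves t).-tuple bool) cprob t s f * g f = expect t s g.
Proof. exact: (sum_tuple_words _ (fun f => cprob t s f * g f)). Qed.

Lemma fitch_t_neq0 t f : fitch_t t f != set0.
Proof.
elim: t f => [p|p l IHl r IHr] f /=.
  by apply/set0Pn; exists (head false f); rewrite inE.
by rewrite /fitch_comb; case: ifP => // _; rewrite setU_eq0 negb_and IHl.
Qed.

Lemma uniform_pick_sgset (A : {set bool}) a : A != set0 ->
  (if a \in A then #|A|%:R^-1 else 0) = 2^-1 * (1 + sgset A * sgb a).
Proof.
have -> : #|A| = ((true \in A) + (false \in A))%N.
  by rewrite -sum1_card big_mkcond big_bool.
rewrite /sgset /sgb => /set0Pn[y]; case: a; case: y;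
  case: (true \in A); case: (false \in A) => //= _; rewrite ?invr1 -?[(1 + 1)%N]/2%N; lra.
Qed.

Lemma RA_MP_Root1 t a : RA_MP (Root1 t) a = 2^-1 * (1 + fitch_bias t).
Proof.
rewrite /RA_MP /= (sum_tuple_expect t a
  (fun f => if a \in fitch_t t f then #|fitch_t t f|%:R^-1 else 0)).
under eq_expect => f _ do rewrite (uniform_pick_sgset _ (fitch_t_neq0 t f)).
rewrite expectZ expectD expect1 expectZr (expect_fitch_t t a).1.
by case: a; rewrite /sgb; ring.
Qed.

Lemma neq_sgb (a b : bool) : (if b != a then 1 else 0) = 2^-1 * (1 - sgb b * sgb a).
Proof. by case: a; case: b; rewrite /sgb /=; lra. Qed.

Lemma pleaf_Root1 t a (i : 'I_(pleaves t)) :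
  pleaf (T := Root1 t) a i = 2^-1 * (1 - leaf_bias t i).
Proof.
rewrite /pleaf /=; under eq_bigr do rewrite (tnth_nth false).
rewrite (sum_tuple_expect t a (fun f => if nth false f i != a then 1 else 0)).
under eq_expect => f _ do rewrite neq_sgb.
rewrite expectZ expectD expectN expect1 expectZr expect_sgb_nth //.
by case: a; rewrite /sgb; ring.
Qed.

Lemma RA_MP_Root1_ge t a : pvalid t -> 1 - pmax (Root1 t) a <= RA_MP (Root1 t) a.
Proof.
move=> t_ok; have [i lt_i le_i] := exists_leaf_bias_le_fitch_bias t_ok.
apply: le_trans (_ : 1 - pleaf (T := Root1 t) a (Ordinal lt_i) <= _).
  by rewrite lerD2l lerN2 /pmax le_bigmax.
by rewrite pleaf_Root1 RA_MP_Root1; lra.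
Qed.

(* A root of out-degree 2 behaves as a root of out-degree 1 whose single edge
   never mutates. *)
Lemma rprob_Root2 l r a f : rprob (Root2 l r) a f = rprob (Root1 (PNode 0 l r)) a f.
Proof. by rewrite /= big_bool /trans; case: a => /=; ring. Qed.

Lemma RA_MP_Root2 l r a : RA_MP (Root2 l r) a = RA_MP (Root1 (PNode 0 l r)) a.
Proof. by apply: eq_bigr => f _; rewrite rprob_Root2. Qed.

Lemma pmax_Root2 l r a : pmax (Root2 l r) a = pmax (Root1 (PNode 0 l r)) a.
Proof. by apply: eq_bigr => i _; apply: eq_bigr => f _; rewrite rprob_Root2. Qed.

End Tree.

Theorem corollary1 (R : realFieldType) (T : rtree R) (a : bool) :
  rvalid T -> 1 - pmax T a <= RA_MP T a.
Proof.
case: T => [t|l r] /=; first exact: RA_MP_Root1_ge.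
case/andP=> l_ok r_ok; rewrite RA_MP_Root2 pmax_Root2.
by apply: RA_MP_Root1_ge; rewrite /= l_ok r_ok lexx invr_ge0 ler0n.
Qed.
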